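(* Let $R$ be a semifield and $X_1,\dots,X_n$ $R$-convex sets. The map $U_{(X_i)}:\prod_{i\in\underline n}X_i\to\bigotimes_{i\in\underline n}X_i$, $(x_1,\dots,x_n)\mapsto x_1\otimes\cdots\otimes x_n$, is $n$-convex, and for every $R$-convex set $Z$, restriction along $U_{(X_i)}$ is a bijection $\mathsf{CSet}_R(\bigotimes_{i}X_i,Z)\to\mathrm{Conv}_n((X_i)_{i\in\underline n},Z)$, natural in all variables.
   Context: A semifield is a commutative semiring in which every nonzero element is invertible. $D_R$ is the monad on $\mathsf{Set}$ of finitely supported $p:X\to R$ with $\sum p=1$ (pushforward, $\mu(P)(x)=\sum_qP(q)q(x)$, Dirac unit); $\mathsf{CSet}_R$ is the category of $D_R$-algebras ($R$-convex sets) and convex maps; $\sum\alpha_ix_i$ denotes the structure map applied to the formal combination $\sum\alpha_i\bullet x_i$. $\underline n=\{1,\dots,n\}$. A map $f:\prod_iX_i\to Z$ is $n$-convex if it is convex in each variable separately, i.e. $f(\dots,\sum_j\alpha_jx_j,\dots)=\sum_j\alpha_jf(\dots,x_j,\dots)$ with other arguments fixed; $\mathrm{Conv}_n((X_i),Z)$ is the set of such maps. $\bigotimes_iX_i$ is the quotient of $D_R(\prod_iX_i)$ by the smallest convex equivalence relation containing $1\bullet(\sum_{j_i}\alpha^i_{j_i}x^i_{j_i})_{i}\sim\sum_{(j_1,\dots,j_n)}\alpha^1_{j_1}\cdots\alpha^n_{j_n}\bullet(x^1_{j_1},\dots,x^n_{j_n})$, and $x_1\otimes\cdots\otimes x_n$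 denotes the class of $1\bullet(x_1,\dots,x_n)$. *)

From HB Require Import structures.
From mathcomp Require Import all_boot all_order all_algebra.
From mathcomp Require Import finmap generic_quotient.
From mathcomp Require Import boolp.
Set Implicit Arguments. Unset Strict Implicit. Unset Printing Implicit Defensive.
Import GRing.Theory.
Local Open Scope ring_scope.
Local Open Scope fset_scope.
Local Open Scope quotient_scope.

Section Dist.
Variable R : comPzSemiRingType.

Notation fsf X := {fsfun X -> R with 0}.

Definition dsum (X : choiceType) (p : fsf X) : R := \sum_(x <- finsupp p) p x.

Lemma dsum_sub (X : choiceType) (p : fsf X) (S : {fset X}) :
  finsupp p `<=` S -> dsum p = \sum_(x <- S) p x.
Proof.
move=> sub; rewrite /dsum; apply: big_fset_incl => // x _ xN.
by rewrite fsfun_dflt.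
Qed.

Record dist (X : choiceType) := Dist { dfun :> fsf X; dfunP : dsum dfun == 1 }.
HB.instance Definition _ (X : choiceType) := [isSub for @dfun X].
HB.instance Definition _ (X : choiceType) := [Choice of dist X by <:].

Definition dirac_fun (X : choiceType) (x : X) : fsf X :=
  [fsfun y in [fset x] => (1 : R) | 0].

Lemma dirac_funE (X : choiceType) (x y : X) :
  dirac_fun x y = if y == x then 1 else 0.
Proof. by rewrite /dirac_fun fsfun_fun inE. Qed.

Lemma dirac_subproof (X : choiceType) (x : X) : dsum (dirac_fun x) == 1.
Proof.
rewrite (@dsum_sub _ _ [fset x]) ?finsupp_sub // big_seq_fset1.
by rewrite dirac_funE eqxx.
Qed.

Definition dirac (X : choiceType) (x : X) : dist X := Dist (dirac_subproof x).

Definition dmap_fun (X Y : choiceType) (f : X -> Y) (p : fsf X) : fsf Y :=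
  [fsfun y in [fset f x | x in finsupp p] =>
     \sum_(x <- finsupp p | f x == y) p x | 0].

Lemma dmap_subproof (X Y : choiceType) (f : X -> Y) (p : dist X) :
  dsum (dmap_fun f p) == 1.
Proof.
rewrite (@dsum_sub _ _ [fset f x | x in finsupp p]) ?finsupp_sub //.
rewrite (eq_fbigr _ (G := fun y => \sum_(x <- finsupp p | f x == y) p x));
  last by move=> y yin _; rewrite /dmap_fun fsfun_fun yin.
under eq_bigr do rewrite big_mkcond.
rewrite exchange_big /= -(eqP (dfunP p)) /dsum; apply/eqP; apply: eq_fbigr => x xin _.
rewrite -big_mkcond /=.
rewrite (eq_bigl (fun y => y == f x)); last by move=> y; rewrite eq_sym.
rewrite (@fbig_pred1_inj _ _ _ _ _ (fun=> p x) id) //.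
by apply/imfsetP; exists x.
Qed.

Definition dmap (X Y : choiceType) (f : X -> Y) (p : dist X) : dist Y :=
  Dist (dmap_subproof f p).

Definition dmu_fun (X : choiceType) (P : fsf (dist X)) : fsf X :=
  [fsfun x in \bigcup_(q <- finsupp P) finsupp (dfun q) =>
     \sum_(q <- finsupp P) P q * q x | 0].

Lemma dmu_subproof (X : choiceType) (P : dist (dist X)) :
  dsum (dmu_fun P) == 1.
Proof.
set U := \bigcup_(q <- finsupp P) finsupp (dfun q).
rewrite (@dsum_sub _ _ U) ?finsupp_sub //.
rewrite (eq_fbigr _ (G := fun x => \sum_(q <- finsupp P) P q * q x));
  last by move=> x xin _; rewrite /dmu_fun fsfun_fun xin.
rewrite exchange_big /= -(eqP (dfunP P)) /dsum; apply/eqP; apply: eq_fbigr => q qin _.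
rewrite -mulr_sumr -(@dsum_sub _ q U) ?(eqP (dfunP q)) ?mulr1 //.
apply/fsubsetP => x xq; apply/bigfcupP; exists q => //.
by rewrite qin.
Qed.

Definition dmu (X : choiceType) (P : dist (dist X)) : dist X :=
  Dist (dmu_subproof P).

End Dist.

Arguments dirac {R X}.

Section Convex.
Variable R : comPzSemiRingType.

Definition is_calg (A : choiceType) (a : dist R A -> A) : Prop :=
  (forall x : A, a (dirac x) = x) /\
  (forall P : dist R (dist R A), a (dmu P) = a (dmap a P)).

(* R-convex sets = D_R-algebras *)
Record cset := CSet {
  csort :> choiceType;
  calg : dist R csort -> csort;
  calgP : is_calg calg }.

Definition is_cmap (A B : choiceType) (a : dist R A -> A) (b : dist R B -> B)
  (f : A -> B) : Prop :=
  forall p : dist R A, f (a p) = b (dmap f p).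

Definition prodc (n : nat) (X : 'I_n -> cset) : choiceType :=
  {dffun forall i : 'I_n, X i}.

Definition upd (n : nat) (X : 'I_n -> cset) (x : prodc X) (i : 'I_n) (y : X i)
  : prodc X := [ffun j => dfwith (x : forall j, X j) y j].

Definition nconvex (n : nat) (X : 'I_n -> cset) (Z : choiceType)
  (c : dist R Z -> Z) (f : prodc X -> Z) : Prop :=
  forall (i : 'I_n) (x : prodc X) (p : dist R (X i)),
    f (upd x (calg p)) = c (dmap (fun y => f (upd x y)) p).

(* the free convex structure on D_R A is mu; a relation r on D_R A is a
   convex equivalence relation if it is an equivalence relation and a convex
   subset of D_R A x D_R A *)
Definition equivalence (T : Type) (r : T -> T -> Prop) : Prop :=
  [/\ forall a, r a a, forall a b, r a b -> r b a &
      forall a b c, r a b -> r b c -> r a c].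

Definition convex_rel (A : choiceType) (r : dist R A -> dist R A -> Prop) : Prop :=
  forall Q : dist R (dist R A * dist R A)%type,
    (forall pq, pq \in finsupp Q -> r pq.1 pq.2) ->
    r (dmu (dmap fst Q)) (dmu (dmap snd Q)).

Section Tensor.
Variables (n : nat) (X : 'I_n -> cset).

(* generating pairs:
   1 . (sum_j a^i_j x^i_j)_i  ~  sum_(j_1..j_n) a^1_(j_1)...a^n_(j_n) . (x^1_(j_1),...)
   i.e. dirac of (alpha_i p_i)_i related to the product of the p_i *)
Definition tgen (u v : dist R (prodc X)) : Prop :=
  exists ps : forall i : 'I_n, dist R (X i),
    u = dirac ([ffun i => calg (ps i)] : prodc X) /\
    forall x : prodc X, v x = \prod_(i < n) ps i (x i).

Definition trel (u v : dist R (prodc X)) : Prop :=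
  forall r : dist R (prodc X) -> dist R (prodc X) -> Prop,
    equivalence r -> convex_rel r -> (forall a b, tgen a b -> r a b) -> r u v.

Definition trelb : rel (dist R (prodc X)) := fun u v => `[< trel u v >].

Lemma trelb_refl : reflexive trelb.
Proof. by move=> u; apply/asboolP => r [rr _ _] _ _; apply: rr. Qed.
Lemma trelb_sym : symmetric trelb.
Proof.
suff H : forall u v, trelb u v -> trelb v u.
  by move=> u v; apply/idP/idP; apply: H.
move=> u v /asboolP huv; apply/asboolP => r req rc rg.
by case: (req) => _ rs _; apply: rs; apply: huv.
Qed.
Lemma trelb_trans : transitive trelb.
Proof.
move=> v u w /asboolP huv /asboolP hvw; apply/asboolP => r req rc rg.
by case: (req) => _ _ rt; apply: (rt _ v); [apply: huv | apply: hvw].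
Qed.

Canonical trel_equiv := EquivRel trelb trelb_refl trelb_sym trelb_trans.

Definition tensor : choiceType := {eq_quot trel_equiv}.

Definition talg (P : dist R tensor) : tensor :=
  \pi_tensor (dmu (dmap (@repr _ tensor) P)).

Definition tunit (x : prodc X) : tensor := \pi_tensor (dirac x).

End Tensor.

Definition prodmap (n : nat) (X Y : 'I_n -> cset) (f : forall i, X i -> Y i)
  (x : prodc X) : prodc Y := [ffun i => f i (x i)].

Definition tmap (n : nat) (X Y : 'I_n -> cset) (f : forall i, X i -> Y i)
  (t : tensor X) : tensor Y :=
  \pi_(tensor Y) (dmap (prodmap f) (repr t)).

End Convex.

Arguments talg {R n} X P.
Arguments tunit {R n} X x.
Arguments tensor {R n} X.
Arguments nconvex {R n X Z} c f.
Arguments is_cmap {R A B} a b f.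
Arguments tmap {R n X Y} f t.
Arguments prodmap {R n X Y} f x.

From HB Require Import structures.
From mathcomp Require Import all_boot all_order all_algebra.
From mathcomp Require Import finmap generic_quotient boolp.
Import GRing.Theory.

(* The tensor product is the quotient of the free convex set D_R(prod_i X_i)
   by a convex equivalence relation, so it is convex, and its convex maps to Z
   correspond to the maps f : prod_i X_i -> Z whose barycentric extension
   p |-> sum_x p(x) f(x) is constant on the generating pairs.  For an n-convex
   f this is the identity
     f (sum_j a^1_j x^1_j, ..., sum_j a^n_j x^n_j)
       = sum_(j_1..j_n) a^1_(j_1) ... a^n_(j_n) f (x^1_(j_1), ..., x^n_(j_n)),
   proved by expanding one coordinate at a time: after k steps the expanded
   distribution is the product of the first k distributions, with the
   remaining coordinates still Dirac.  The map U itself is n-convex because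
   1 . (x with x_i := sum_j a_j y_j) ~ sum_j a_j . (x with x_i := y_j) is a
   generating pair in which all but one distribution are Dirac.  No inverse is
   ever needed: the argument works over any commutative semiring. *)

Set Implicit Arguments. Unset Strict Implicit. Unset Printing Implicit Defensive.
Local Open Scope fset_scope.
Local Open Scope quotient_scope.
Local Open Scope ring_scope.

Section Distributions.
Variable R : comPzSemiRingType.

Lemma sum_indicator_seq (I : eqType) (s : seq I) (a : I) (F : I -> R) :
  uniq s -> \sum_(y <- s) (y == a)%:R * F y = (a \in s)%:R * F a.
Proof.
move=> s_uniq; have [a_s|a_s] := boolP (a \in s).
  rewrite (bigD1_seq a) //= eqxx big1 ?addr0 // => y /negPf->.
  by rewrite mul0r.
rewrite mul0r big1_seq // => y /andP[_ y_s].
by case: eqP => [ya|]; [move: a_s; rewrite -ya y_s | rewrite mul0r].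
Qed.

Lemma dist_ext (X : choiceType) (p q : dist R X) : p =1 q -> p = q.
Proof. by move=> pq; apply: val_inj; apply/fsfunP. Qed.

Lemma big_finsupp_sub (X : choiceType) (p : {fsfun X -> R with 0})
    (S : {fset X}) (G : X -> R) :
  finsupp p `<=` S ->
  \sum_(x <- S) p x * G x = \sum_(x <- finsupp p) p x * G x.
Proof.
move=> pS; apply/esym; apply: big_fset_incl => // x _ xNp.
by rewrite fsfun_dflt // mul0r.
Qed.

Lemma sum_finsupp_indicator (X : choiceType) (p : {fsfun X -> R with 0}) y :
  \sum_(x <- finsupp p) p x * (x == y)%:R = p y.
Proof.
under eq_bigr do rewrite mulrC.
rewrite sum_indicator_seq ?fset_uniq //.
by case: finsuppP => _; rewrite ?mul0r ?mul1r.
Qed.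

Lemma diracE (X : choiceType) (x y : X) : dirac x y = (y == x)%:R :> R.
Proof. by rewrite /= dirac_funE; case: eqP. Qed.

Lemma dmapE (X Y : choiceType) (f : X -> Y) (p : dist R X) y :
  dmap f p y = \sum_(x <- finsupp p) p x * (f x == y)%:R.
Proof.
rewrite /= /dmap_fun fsfun_fun; case: ifPn => y_im.
  by rewrite big_mkcond; apply: eq_bigr => x _; case: eqP; rewrite ?mulr1 ?mulr0.
rewrite big1_seq // => x /andP[_ x_p]; case: eqP => [fx|]; last by rewrite mulr0.
by move: y_im; rewrite -fx in_imfset.
Qed.

Lemma dmuE (X : choiceType) (P : dist R (dist R X)) y :
  dmu P y = \sum_(q <- finsupp P) P q * q y.
Proof.
rewrite /= /dmu_fun fsfun_fun; case: ifPn => // y_supp.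
rewrite big1_seq // => q /andP[_ q_P]; rewrite [dfun q y]fsfun_dflt ?mulr0 //.
by apply: contra y_supp => y_q; apply/bigfcupP; exists q; rewrite ?q_P.
Qed.

Lemma finsupp_dirac (X : choiceType) (x : X) :
  finsupp (dirac x : dist R X) `<=` [fset x].
Proof. exact: finsupp_sub. Qed.

Lemma finsupp_dmap (X Y : choiceType) (f : X -> Y) (p : dist R X) :
  finsupp (dmap f p) `<=` [fset f x | x in finsupp p].
Proof. exact: finsupp_sub. Qed.

Lemma finsupp_dmu (X : choiceType) (P : dist R (dist R X)) :
  finsupp (dmu P) `<=` \bigcup_(q <- finsupp P) finsupp (dfun q).
Proof. exact: finsupp_sub. Qed.

Lemma sum_finsupp_dmap (X Y : choiceType) (f : X -> Y) (p : dist R X) G :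
  \sum_(y <- finsupp (dmap f p)) dmap f p y * G y =
  \sum_(x <- finsupp p) p x * G (f x).
Proof.
rewrite -(big_finsupp_sub _ (finsupp_dmap f p)).
under eq_bigr do rewrite dmapE mulr_suml.
rewrite exchange_big big_seq [RHS]big_seq; apply: eq_bigr => x x_p.
under eq_bigr do rewrite -mulrA mulrCA eq_sym.
by rewrite sum_indicator_seq ?fset_uniq // in_imfset // mul1r.
Qed.

Lemma eq_in_dmap (X Y : choiceType) (f g : X -> Y) (p : dist R X) :
  {in finsupp p, f =1 g} -> dmap f p = dmap g p.
Proof.
move=> fg; apply: dist_ext => y; rewrite !dmapE big_seq [RHS]big_seq.
by apply: eq_bigr => x x_p; rewrite fg.
Qed.

Lemma dirac_neq0 (X : choiceType) (x y : X) : dirac x y != 0 :> R -> y = x.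
Proof. by rewrite diracE; case: (y =P x) => // _; rewrite eqxx. Qed.

Lemma dmap_comp (X Y Z : choiceType) (f : X -> Y) (g : Y -> Z) (p : dist R X) :
  dmap g (dmap f p) = dmap (g \o f) p.
Proof.
apply: dist_ext => z.
by rewrite !dmapE (sum_finsupp_dmap f p (fun y => (g y == z)%:R)).
Qed.

Lemma dmap_dirac (X Y : choiceType) (f : X -> Y) (x : X) :
  dmap f (dirac x) = dirac (f x) :> dist R Y.
Proof.
apply: dist_ext => y.
rewrite dmapE -(big_finsupp_sub _ (finsupp_dirac x)) big_seq_fset1.
by rewrite !diracE eqxx mul1r eq_sym.
Qed.

Lemma dmu_dirac (X : choiceType) (p : dist R X) : dmu (dirac p) = p.
Proof.
apply: dist_ext => y.
rewrite dmuE -(big_finsupp_sub _ (finsupp_dirac p)) big_seq_fset1.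
by rewrite diracE eqxx mul1r.
Qed.

Lemma dmu_dmap_dirac (X : choiceType) (p : dist R X) : dmu (dmap dirac p) = p.
Proof.
apply: dist_ext => y; rewrite dmuE (sum_finsupp_dmap dirac p (fun q => q y)).
by under eq_bigr do rewrite diracE eq_sym; rewrite sum_finsupp_indicator.
Qed.

Lemma dmap_dmu (X Y : choiceType) (f : X -> Y) (P : dist R (dist R X)) :
  dmap f (dmu P) = dmu (dmap (dmap f) P).
Proof.
apply: dist_ext => z.
rewrite dmapE dmuE (sum_finsupp_dmap (dmap f) P (fun q => q z)).
rewrite -(big_finsupp_sub _ (finsupp_dmu P)).
under [LHS]eq_bigr do rewrite dmuE mulr_suml.
rewrite exchange_big big_seq [RHS]big_seq; apply: eq_bigr => q q_P.
under eq_bigr do rewrite -mulrA.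
rewrite -mulr_sumr dmapE big_finsupp_sub //.
by apply/fsubsetP => x x_q; apply/bigfcupP; exists q; rewrite ?q_P.
Qed.

Lemma dmu_dmu (X : choiceType) (P : dist R (dist R (dist R X))) :
  dmu (dmu P) = dmu (dmap (@dmu R X) P).
Proof.
apply: dist_ext => y.
rewrite dmuE dmuE (sum_finsupp_dmap (@dmu R X) P (fun q => q y)).
set S := finsupp (dmu P) `|` \bigcup_(Q <- finsupp P) finsupp (dfun Q).
rewrite -(big_finsupp_sub (S := S)) ?fsubsetUl //.
under [LHS]eq_bigr do rewrite dmuE mulr_suml.
rewrite exchange_big big_seq [RHS]big_seq; apply: eq_bigr => Q Q_P.
under eq_bigr do rewrite -mulrA.
rewrite -mulr_sumr dmuE big_finsupp_sub //.
apply/fsubsetP => q q_Q; rewrite inE; apply/orP; right.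
by apply/bigfcupP; exists Q; rewrite ?Q_P.
Qed.

Lemma prod_indicator (I : finType) (P : pred I) (b : I -> bool) :
  \prod_(j | P j) (b j)%:R = [forall j, P j ==> b j]%:R :> R.
Proof.
case: (boolP [forall j, _]) => [/forallP Pb | /forallPn[j]].
  by rewrite big1 // => j /(implyP (Pb j)) ->.
by rewrite negb_imply => /andP[Pj /negPf bj]; rewrite (bigD1 j) //= bj mul0r.
Qed.

End Distributions.

Section ConvexSets.
Variable R : comPzSemiRingType.

Lemma calg_dirac (Z : cset R) (z : Z) : calg (dirac z) = z.
Proof. by case: (calgP Z). Qed.

Lemma calg_dmu (Z : cset R) (P : dist R (dist R Z)) :
  calg (dmu P) = calg (dmap (@calg R Z) P).
Proof. by case: (calgP Z). Qed.

Lemma calg_dmap_dmu (Y : choiceType) (Z : cset R) (f : Y -> Z)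
    (P : dist R (dist R Y)) :
  calg (dmap f (dmu P)) = calg (dmap (fun q => calg (dmap f q)) P).
Proof. by rewrite dmap_dmu calg_dmu dmap_comp. Qed.

Lemma cmap_comp (A B C : choiceType) (a : dist R A -> A) (b : dist R B -> B)
    (c : dist R C -> C) (g : A -> B) (h : B -> C) :
  is_cmap a b g -> is_cmap b c h -> is_cmap a c (h \o g).
Proof. by move=> g_cmap h_cmap p /=; rewrite g_cmap h_cmap dmap_comp. Qed.

Lemma convex_rel_dmap (A : choiceType) (r : dist R A -> dist R A -> Prop) :
  convex_rel r -> forall (T : choiceType) (P : dist R T) (F G : T -> dist R A),
  (forall t, t \in finsupp P -> r (F t) (G t)) ->
  r (dmu (dmap F P)) (dmu (dmap G P)).
Proof.
move=> r_convex T P F G rFG.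
have := r_convex (dmap (fun t => (F t, G t)) P); rewrite !dmap_comp; apply.
by move=> _ /(fsubsetP (finsupp_dmap _ _)) /imfsetP[t /= t_P ->]; apply: rFG.
Qed.

End ConvexSets.

Section Tensor.
Variables (R : comPzSemiRingType) (n : nat) (X : 'I_n -> cset R).

Lemma trel_sym u v : trel u v -> @trel R n X v u.
Proof.
move=> uv r r_eq r_convex r_gen; case: (r_eq) => _ r_sym _.
by apply: r_sym; apply: uv.
Qed.

Lemma trel_convex : convex_rel (@trel R n X).
Proof.
move=> Q Q_trel r r_eq r_convex r_gen; apply: (r_convex) => pq pq_Q.
exact: Q_trel pq pq_Q r r_eq r_convex r_gen.
Qed.

Lemma tgen_trel u v : tgen u v -> @trel R n X u v.
Proof. by move=> uv r _ _; apply. Qed.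

Lemma pi_trel u v : trel u v -> \pi_(tensor X) u = \pi_(tensor X) v.
Proof. by move=> uv; apply/eqquotP/asboolP. Qed.

Lemma trel_repr_pi u : @trel R n X (repr (\pi_(tensor X) u)) u.
Proof. by apply/asboolP/(eqquotP (tensor X)); rewrite reprK. Qed.

Lemma talg_is_calg : is_calg (talg X).
Proof.
split=> [t|P]; first by rewrite /talg dmap_dirac dmu_dirac reprK.
rewrite /talg dmap_dmu dmu_dmu !dmap_comp; apply: pi_trel.
apply: (convex_rel_dmap trel_convex) => q _.
by apply: trel_sym; apply: trel_repr_pi.
Qed.

Definition tensor_cset : cset R := CSet talg_is_calg.

Lemma talg_dmap_tunit u : talg X (dmap (tunit X) u) = \pi_(tensor X) u.
Proof.
rewrite /talg dmap_comp -[in RHS](dmu_dmap_dirac u); apply: pi_trel.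
by apply: (convex_rel_dmap trel_convex) => q _; apply: trel_repr_pi.
Qed.

End Tensor.

Section Update.
Variables (R : comPzSemiRingType) (n : nat) (X : 'I_n -> cset R).
Implicit Types (x y : prodc X) (i j : 'I_n).

Lemma updE x i (z : X i) j : upd x z j = dfwith (x : forall j, X j) z j.
Proof. by rewrite ffunE. Qed.

Lemma upd_id x i : upd x (x i) = x.
Proof.
by apply/ffunP => j; rewrite updE; have [<-|ij] := eqVneq i j;
  [rewrite dfwith_in | rewrite dfwith_out].
Qed.

Lemma upd_eqE x i (z : X i) y :
  (upd x z == y) = (z == y i) && [forall j, (j != i) ==> (y j == x j)].
Proof.
apply/eqP/andP => [<-|[/eqP-> /forallP yx]].
  split; first by rewrite updE dfwith_in.
  by apply/forallP => j; apply/implyP => ji; rewrite updE dfwith_out // eq_sym.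
apply/ffunP => j; rewrite updE; have [<-|ij] := eqVneq i j.
  by rewrite dfwith_in.
rewrite dfwith_out //; apply/esym/eqP.
by move/implyP: (yx j); apply; rewrite eq_sym.
Qed.

Lemma dmap_updE x i (p : dist R (X i)) y :
  dmap (fun z : X i => upd x z) p y =
  p (y i) * [forall j, (j != i) ==> (y j == x j)]%:R.
Proof.
rewrite dmapE; under eq_bigr do rewrite upd_eqE.
case: [forall j, _]; last by rewrite mulr0 big1 // => z _; rewrite andbF mulr0.
by under eq_bigr do rewrite andbT; rewrite sum_finsupp_indicator mulr1.
Qed.

Lemma prodc_nconvex (Y : 'I_n -> cset R) (Z : choiceType) (c : dist R Z -> Z)
    (g : prodc Y -> Z) (f : forall i, X i -> Y i) :
  (forall i, is_cmap (@calg R (X i)) (@calg R (Y i)) (f i)) ->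
  nconvex c g -> nconvex c (g \o prodmap f).
Proof.
have prodmap_upd x i (z : X i) : prodmap f (upd x z) = upd (prodmap f x) (f i z).
  apply/ffunP => j; rewrite !ffunE; have [<-|ij] := eqVneq i j.
    by rewrite !dfwith_in.
  by rewrite !dfwith_out // ffunE.
move=> f_cmap g_nconvex i x p /=.
rewrite prodmap_upd f_cmap g_nconvex !dmap_comp.
by congr c; apply: eq_in_dmap => z _ /=; rewrite prodmap_upd.
Qed.

Lemma finsupp_prod_dist (D : dist R (prodc X)) (q : forall i, dist R (X i)) i x :
  (forall y, D y = \prod_j q j (y j)) -> x \in finsupp D -> q i (x i) != 0.
Proof.
move=> Dq; rewrite mem_finsupp Dq (bigD1 i) //=.
by apply: contra_neq => ->; rewrite mul0r.
Qed.

Lemma tunit_nconvex : nconvex (talg X) (tunit X).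
Proof.
move=> i x p; rewrite -(dmap_comp (fun z : X i => upd x z)) talg_dmap_tunit.
apply: pi_trel; apply: tgen_trel.
exists (@dfwith _ (fun j => dist R (X j)) (fun j => dirac (x j)) i p); split.
  congr dirac; apply/ffunP => j; rewrite !ffunE; have [<-|ij] := eqVneq i j.
    by rewrite !dfwith_in.
  by rewrite !dfwith_out // calg_dirac.
move=> y; rewrite dmap_updE (bigD1 i) //= dfwith_in -prod_indicator.
congr (_ * _).
by apply: eq_bigr => j ji; rewrite dfwith_out ?diracE // eq_sym.
Qed.

End Update.

Section Expansion.
Variables (R : comPzSemiRingType) (n : nat) (X : 'I_n -> cset R).

Definition expand_at i (p : dist R (X i)) (D : dist R (prodc X)) :
  dist R (prodc X) :=
  dmu (dmap (fun x => dmap (fun z : X i => upd x z) p) D).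

Lemma expand_atE i (p : dist R (X i)) (z : X i) (D : dist R (prodc X)) :
  (forall x, x \in finsupp D -> x i = z) ->
  forall y, expand_at p D y = D (upd y z) * p (y i).
Proof.
move=> D_z y; rewrite /expand_at dmuE.
rewrite (sum_finsupp_dmap (fun x => dmap (fun z : X i => upd x z) p) D
  (fun q => q y)).
transitivity (\sum_(x <- finsupp D) D x * (x == upd y z)%:R * p (y i)).
  rewrite big_seq [RHS]big_seq; apply: eq_bigr => x x_D /=.
  rewrite dmap_updE mulrA mulrAC; congr (_ * _%:R * _).
  rewrite eq_sym upd_eqE (D_z x x_D) eqxx /=.
  by congr nat_of_bool; apply: eq_forallb => j; rewrite [y j == _]eq_sym.
by rewrite -mulr_suml sum_finsupp_indicator.
Qed.

Lemma calg_expand_at (Z : cset R) (f : prodc X -> Z) i (p : dist R (X i))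
    (D : dist R (prodc X)) :
  nconvex (@calg R Z) f ->
  calg (dmap f (expand_at p D)) = calg (dmap (fun x => f (upd x (calg p))) D).
Proof.
move=> f_nconvex; rewrite calg_dmap_dmu dmap_comp; congr calg.
by apply: eq_in_dmap => x _ /=; rewrite f_nconvex dmap_comp.
Qed.

Variable ps : forall i, dist R (X i).

Let x0 : prodc X := [ffun i => calg (ps i)].

Fixpoint partial_prod (k : nat) : dist R (prodc X) :=
  if k is k.+1 then
    if (insub k : option 'I_n) is Some i then expand_at (ps i) (partial_prod k)
    else partial_prod k
  else dirac x0.

Let factor (k : nat) j : dist R (X j) := if (j < k)%N then ps j else dirac (x0 j).

Lemma partial_prodE k y : partial_prod k y = \prod_j factor k j (y j).
Proof.
elim: k y => [|k IH] y /=.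
  rewrite diracE /factor; under eq_bigr do rewrite diracE.
  rewrite prod_indicator; congr (nat_of_bool _)%:R.
  apply/eqP/forallP => [-> j|y_x0]; first by rewrite /= eqxx.
  by apply/ffunP => j; apply/eqP; apply: y_x0.
have factorS (j : 'I_n) : (j != k :> nat) -> factor k.+1 j = factor k j.
  by move=> jk; rewrite /factor ltnS leq_eqVlt (negPf jk).
case: insubP => [i _ iE|k_n]; last first.
  rewrite IH; apply: eq_bigr => j _; rewrite factorS //.
  by apply: contraNneq k_n => <-.
have factor_ki : factor k i = dirac (x0 i) by rewrite /factor iE ltnn.
have factor_Ski : factor k.+1 i = ps i by rewrite /factor iE ltnSn.
have D_x0 x : x \in finsupp (partial_prod k) -> x i = x0 i.
  by move=> /(finsupp_prod_dist i IH); rewrite factor_ki => /dirac_neq0.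
rewrite (expand_atE (ps i) D_x0) IH [RHS](bigD1 i) //= (bigD1 i) //=.
rewrite updE dfwith_in factor_ki factor_Ski diracE eqxx mul1r mulrC.
congr (_ * _); apply: eq_bigr => j ji; rewrite updE dfwith_out 1?eq_sym //.
by rewrite factorS // -iE; apply: contra_neq ji => /val_inj.
Qed.

Lemma partial_prod_supp k x (i : 'I_n) :
  x \in finsupp (partial_prod k) -> (k <= i)%N -> x i = x0 i.
Proof.
move=> /(finsupp_prod_dist i (partial_prodE k)) + k_i.
by rewrite /factor ltnNge k_i => /dirac_neq0.
Qed.

Variables (Z : cset R) (f : prodc X -> Z).
Hypothesis f_nconvex : nconvex (@calg R Z) f.

Lemma calg_partial_prod k : calg (dmap f (partial_prod k)) = f x0.
Proof.
elim: k => [|k IH] /=; first by rewrite dmap_dirac calg_dirac.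
case: insubP => [i _ iE|_] //; rewrite calg_expand_at // -IH; congr calg.
apply: eq_in_dmap => x /partial_prod_supp x_x0 /=.
have -> : calg (ps i) = x i by rewrite x_x0 ?iE // ffunE.
by rewrite upd_id.
Qed.

Lemma nconvex_prod_dist (v : dist R (prodc X)) :
  (forall y, v y = \prod_i ps i (y i)) -> f x0 = calg (dmap f v).
Proof.
move=> vE; have -> : v = partial_prod n.
  apply: dist_ext => y; rewrite partial_prodE vE.
  by apply: eq_bigr => j _; rewrite /factor ltn_ord.
by rewrite calg_partial_prod.
Qed.

End Expansion.

Section UniversalProperty.
Variables (R : comPzSemiRingType) (n : nat) (X : 'I_n -> cset R) (Z : cset R).

Lemma cmap_tunit_nconvex (g : tensor X -> Z) :
  is_cmap (talg X) (@calg R Z) g -> nconvex (@calg R Z) (g \o tunit X).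
Proof. by move=> g_cmap i x p /=; rewrite tunit_nconvex g_cmap dmap_comp. Qed.

Lemma cmap_tensor_eq (g1 g2 : tensor X -> Z) :
  is_cmap (talg X) (@calg R Z) g1 -> is_cmap (talg X) (@calg R Z) g2 ->
  (forall x, g1 (tunit X x) = g2 (tunit X x)) -> g1 =1 g2.
Proof.
move=> g1_cmap g2_cmap g12 t.
rewrite -(reprK t) -talg_dmap_tunit g1_cmap g2_cmap !dmap_comp.
by congr calg; apply: eq_in_dmap => x _ /=.
Qed.

Variable f : prodc X -> Z.
Hypothesis f_nconvex : nconvex (@calg R Z) f.

Definition tensor_lift (t : tensor X) : Z := calg (dmap f (repr t)).

Lemma calg_dmap_trel u v : trel u v -> calg (dmap f u) = calg (dmap f v).
Proof.
move=> uv; apply: (uv (fun u v => calg (dmap f u) = calg (dmap f v))).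
- by split=> [//|a b ->|a b c -> ->].
- move=> Q Q_eq; rewrite !calg_dmap_dmu !dmap_comp; congr calg.
  by apply: eq_in_dmap => pq /Q_eq.
- move=> _ w [ps [-> wE]]; rewrite dmap_dirac calg_dirac.
  exact: nconvex_prod_dist.
Qed.

Lemma tensor_lift_cmap : is_cmap (talg X) (@calg R Z) tensor_lift.
Proof.
move=> P; rewrite /tensor_lift /talg (calg_dmap_trel (trel_repr_pi _)).
by rewrite calg_dmap_dmu dmap_comp.
Qed.

Lemma tensor_lift_tunit x : tensor_lift (tunit X x) = f x.
Proof.
rewrite /tensor_lift /tunit (calg_dmap_trel (trel_repr_pi _)).
by rewrite dmap_dirac calg_dirac.
Qed.

End UniversalProperty.

Section Naturality.
Variables (R : comPzSemiRingType) (n : nat) (X Y : 'I_n -> cset R).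

Lemma tmap_lift (f : forall i, X i -> Y i) :
  tmap f =1 @tensor_lift R n X (tensor_cset Y) (tunit Y \o prodmap f).
Proof.
by move=> t; rewrite /tensor_lift -(dmap_comp (prodmap f)) /= talg_dmap_tunit.
Qed.

Lemma tunit_prodmap_nconvex (f : forall i, X i -> Y i) :
  (forall i, is_cmap (@calg R (X i)) (@calg R (Y i)) (f i)) ->
  nconvex (@calg R (tensor_cset Y)) (tunit Y \o prodmap f).
Proof. by move=> f_cmap; apply: prodc_nconvex f_cmap (@tunit_nconvex R n Y). Qed.

Lemma tmap_cmap (f : forall i, X i -> Y i) :
  (forall i, is_cmap (@calg R (X i)) (@calg R (Y i)) (f i)) ->
  is_cmap (talg X) (talg Y) (tmap f).
Proof.
move=> /tunit_prodmap_nconvex/tensor_lift_cmap lift_cmap P.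
rewrite tmap_lift lift_cmap.
by congr (talg Y); apply: eq_in_dmap => t _; rewrite tmap_lift.
Qed.

Lemma tmap_tunit (f : forall i, X i -> Y i) x :
  (forall i, is_cmap (@calg R (X i)) (@calg R (Y i)) (f i)) ->
  tmap f (tunit X x) = tunit Y (prodmap f x).
Proof.
by move=> /tunit_prodmap_nconvex f_nconvex; rewrite tmap_lift tensor_lift_tunit.
Qed.

End Naturality.

Unset Implicit Arguments.

Theorem mainTheorem15 (R : comNzSemiRingType)
  (semifield : forall a : R, a != 0 -> exists b : R, a * b = 1)
  (n : nat) (X : 'I_n -> cset R) :
  (* the tensor product, with its induced structure, is an R-convex set *)
  is_calg (talg X) /\
  (* U_(X_i) is n-convex *)
  nconvex (talg X) (tunit X) /\
  (* restriction along U_(X_i) is a bijection CSet_R(tensor X, Z) -> Conv_n(X, Z) *)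
  (forall Z : cset R,
     (forall g : tensor X -> Z,
        is_cmap (talg X) (@calg R Z) g -> nconvex (@calg R Z) (g \o tunit X)) /\
     (forall g1 g2 : tensor X -> Z,
        is_cmap (talg X) (@calg R Z) g1 -> is_cmap (talg X) (@calg R Z) g2 ->
        (forall x, g1 (tunit X x) = g2 (tunit X x)) -> forall t, g1 t = g2 t) /\
     (forall f : prodc X -> Z, nconvex (@calg R Z) f ->
        exists g : tensor X -> Z,
          is_cmap (talg X) (@calg R Z) g /\ forall x, g (tunit X x) = f x)) /\
  (* naturality in the X_i *)
  (forall (Y : 'I_n -> cset R) (f : forall i, X i -> Y i),
     (forall i, is_cmap (@calg R (X i)) (@calg R (Y i)) (f i)) ->
     is_cmap (talg X) (talg Y) (tmap f) /\
     forall (Z : cset R) (g : tensor Y -> Z), is_cmap (talg Y) (@calg R Z) g ->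
       forall x, (g \o tmap f) (tunit X x) = (g \o tunit Y) (prodmap f x)) /\
  (* naturality in Z *)
  (forall (Z Z' : cset R) (h : Z -> Z') (g : tensor X -> Z),
     is_cmap (@calg R Z) (@calg R Z') h -> is_cmap (talg X) (@calg R Z) g ->
     is_cmap (talg X) (@calg R Z') (h \o g) /\
     forall x, (h \o g) (tunit X x) = h ((g \o tunit X) x)).
Proof.
split; first exact: talg_is_calg.
split; first exact: tunit_nconvex.
split.
  move=> Z; split; first exact: cmap_tunit_nconvex.
  split; first exact: cmap_tensor_eq.
  move=> f f_nconvex; exists (tensor_lift f).
  by split; [exact: tensor_lift_cmap | exact: tensor_lift_tunit].
split.
  move=> Y f f_cmap; split; first exact: tmap_cmap.
  by move=> Z g _ x /=; rewrite tmap_tunit.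
by move=> Z Z' h g h_cmap g_cmap; split; first exact: cmap_comp.
Qed.
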